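(* Let $N\ge 1$ and $\alpha\in\mathbb{C}$ with $|\alpha|=1$. The augmented Laplacian $L_\alpha(\mathcal{B}_N)=L(\mathcal{B}_N)+C_\alpha$ has a complete set of eigenvectors each of which is of one of the following forms: (i) $h$ is a Dirichlet eigenvector of $L(\mathcal{B}_N)$ (and its $L_\alpha(\mathcal{B}_N)$-eigenvalue equals its $L(\mathcal{B}_N)$-eigenvalue), or (ii) $h=\sum_{\kappa=0}^N c_\kappa(\alpha)h_{n,\kappa}$ for some coefficients $c_\kappa(\alpha)\in\mathbb{C}$. There are $N+1$ mutually orthogonal eigenvectors of $L_\alpha(\mathcal{B}_N)$ of the second type.
   Context: $L(\mathcal{B}_N)$ is the unnormalized Laplacian $(Lf)(v)=\sum_{w\sim v}[f(v)-f(w)]$ of the Boolean cube $\mathcal{B}_N$ (vertex set $\mathbb{Z}_2^N$, $v\sim w$ iff $v-w=e_i$ for a standard basis vector $e_i$). Write $\mathbf{0}=(0,\dots,0)$, $\mathbf{1}=(1,\dots,1)$. For $\alpha\ne0$, the corner operator $C_\alpha$ on vertex functions of $\mathcal{B}_N$ is defined by $(C_\alpha f)(\mathbf{0})=f(\mathbf{0})-f(\mathbf{1})/\alpha$, $(C_\alpha f)(\mathbf{1})=f(\mathbf{1})-\alpha f(\mathbf{0})$, and $(C_\alpha f)(v)=0$ for $v\notin\{\mathbf{0},\mathbf{1}\}$. A Dirichlet eigenvector of $L(\mathcal{B}_N)$ is an eigenvector vanishing at $\mathbf{0}$ and $\mathbf{1}$. For $\gamma\in\mathbb{Z}_2^N$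 let $|\gamma|$ be its number of coordinates equal to $1$ and $h_\gamma(v)=2^{-N/2}(-1)^{\langle v,\gamma\rangle}$; for $\kappa=0,\dots,N$, $h_{n,\kappa}=c_\kappa\sum_{|\gamma|=\kappa}h_\gamma$ with $c_\kappa>0$ chosen so that $\|h_{n,\kappa}\|=1$. *)

(* Scalars: an arbitrary numeric algebraically closed
   field C (e.g. the complex numbers), with conjugation x^* and norm `|x|. *)
From HB Require Import structures.
From mathcomp Require Import all_boot all_order all_algebra.
Set Implicit Arguments. Unset Strict Implicit. Unset Printing Implicit Defensive.
Import Order.TTheory GRing.Theory Num.Theory.
Local Open Scope ring_scope.

Definition cube (N : nat) : finType := {ffun 'I_N -> bool}.

Definition cube0 (N : nat) : cube N := [ffun => false].
Definition cube1 (N : nat) : cube N := [ffun => true].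

Definition cube_adj (N : nat) (v w : cube N) : bool :=
  #|[set i : 'I_N | v i != w i]| == 1%N.

Section Ops.
Variables (C : numClosedFieldType) (N : nat).

Definition cubeL (f : cube N -> C) (v : cube N) : C :=
  \sum_(w : cube N | cube_adj v w) (f v - f w).

Definition corner (alpha : C) (f : cube N -> C) (v : cube N) : C :=
  if v == cube0 N then f (cube0 N) - f (cube1 N) / alpha
  else if v == cube1 N then f (cube1 N) - alpha * f (cube0 N)
  else 0.

Definition augL (alpha : C) (f : cube N -> C) (v : cube N) : C :=
  cubeL f v + corner alpha f v.

Definition cdot (f g : cube N -> C) : C := \sum_(v : cube N) f v * (g v)^*.
Definition cnorm (f : cube N -> C) : C := sqrtC (cdot f f).

Definition eigenpair (A : (cube N -> C) -> cube N -> C) (h : cube N -> C) (lam : C) :=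
  (exists v, h v != 0) /\ forall v, A h v = lam * h v.

Definition dirichlet_eigvec (h : cube N -> C) : Prop :=
  (exists lam, eigenpair cubeL h lam) /\ h (cube0 N) = 0 /\ h (cube1 N) = 0.

Definition wt (g : cube N) : nat := #|[set i : 'I_N | g i]|.
Definition ip2 (v g : cube N) : nat := #|[set i : 'I_N | v i && g i]|.

Definition hgamma (g : cube N) (v : cube N) : C :=
  (sqrtC (2 ^+ N))^-1 * (-1) ^+ ip2 v g.

Definition hsum (k : nat) (v : cube N) : C :=
  \sum_(g : cube N | wt g == k) hgamma g v.
Definition hnk (k : nat) (v : cube N) : C := (cnorm (hsum k))^-1 * hsum k v.

Definition lin_indep (I : finType) (h : I -> cube N -> C) : Prop :=
  forall c : I -> C, (forall v, \sum_(i : I) c i * h i v = 0) -> forall i, c i = 0.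

(* complete set of eigenvectors: #|V| linearly independent eigenvectors
   (a basis of the space of vertex functions), indexed by the vertices *)
Definition complete_eigvecs (A : (cube N -> C) -> cube N -> C)
    (h : cube N -> cube N -> C) : Prop :=
  lin_indep h /\ forall i, exists lam, eigenpair A (h i) lam.

Definition type_i (alpha : C) (h : cube N -> C) : Prop :=
  dirichlet_eigvec h /\ exists lam, eigenpair cubeL h lam /\ eigenpair (augL alpha) h lam.

Definition type_ii (h : cube N -> C) : Prop :=
  exists c : 'I_N.+1 -> C, forall v, h v = \sum_(k < N.+1) c k * hnk k v.

End Ops.

From HB Require Import structures.
From mathcomp Require Import all_boot all_order all_algebra.
From mathcomp Require Import ring spectral.
Import Order.TTheory GRing.Theory Num.Theory.
Local Open Scope ring_scope.
Set Implicit Arguments. Unset Strict Implicit. Unset Printing Implicit Defensive.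

(* The characters h_gamma form an orthonormal eigenbasis of L(B_N), with
   L h_gamma = 2|gamma| h_gamma.  When |alpha| = 1 the corner operator has rank one,
     C_alpha f = (f(0) - alpha^* f(1)) (delta_0 - alpha delta_1),
   and the Fourier coefficient of delta_0 - alpha delta_1 at gamma depends only on
   |gamma|.  So if gamma is not the chosen representative gamma_k of its level
   k = |gamma|, then h_gamma - h_gamma_k vanishes at 0 and 1, is an L-eigenvector and
   is killed by C_alpha: this gives the vectors of type (i).  The level sums h_{n,k}
   span an (N+1)-dimensional L_alpha-invariant space, on which L_alpha acts by a
   Hermitian matrix, diag(2k) plus a rank one term; a unitary diagonalisation of it
   gives N+1 orthonormal eigenvectors of type (ii).  These are orthogonal to the type (i)
   vectors, whence all 2^N vectors are linearly independent. *)

Lemma conj_sqrtC (C : numClosedFieldType) (x : C) : 0 <= x -> (sqrtC x)^* = sqrtC x.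
Proof. by move=> x_ge0; apply/conj_Creal/ger0_real; rewrite sqrtC_ge0. Qed.

Lemma sum_mulr_eq (T : finType) (R : pzSemiRingType) (F : T -> R) (a : T) :
  \sum_t F t * (t == a)%:R = F a.
Proof. by under eq_bigr do rewrite mulr_natr mulrb; rewrite -big_mkcond big_pred1_eq. Qed.

Section SpectralRows.
Variables (C : numClosedFieldType) (n : nat) (A : 'M[C]_n).

Lemma spectralmx_eigen_row : A \is normalmx ->
  forall k j, \sum_l spectralmx A k l * A l j = spectral_diag A 0 k * spectralmx A k j.
Proof.
move=> A_normal k j.
have : spectralmx A *m A = diag_mx (spectral_diag A) *m spectralmx A.
  by rewrite [X in _ *m X](orthomx_spectralP A_normal) !mulmxA mulmxV ?spectral_unit ?mul1mx.
by rewrite mul_diag_mx => /matrixP /(_ k j); rewrite !mxE.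
Qed.

Lemma spectralmx_row_dot k k' :
  \sum_j spectralmx A k j * (spectralmx A k' j)^* = (k == k')%:R.
Proof.
move: (spectral_unitarymx A) => /unitarymxP /matrixP /(_ k k'); rewrite !mxE => <-.
by apply: eq_bigr => j _; rewrite !mxE.
Qed.

End SpectralRows.

Section VertexFunctions.
Variables (C : numClosedFieldType) (N : nat).

Lemma cdot_suml (I : finType) (c : I -> C) (h : I -> cube N -> C) t :
  cdot (fun v => \sum_i c i * h i v) t = \sum_i c i * cdot (h i) t.
Proof.
rewrite /cdot; under eq_bigr do rewrite mulr_suml.
rewrite exchange_big; apply: eq_bigr => i _ /=.
by rewrite mulr_sumr; apply: eq_bigr => v _; rewrite mulrA.
Qed.

Lemma lin_indep_neq0 (I : finType) (h : I -> cube N -> C) :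
  lin_indep h -> forall i, exists v, h i v != 0.
Proof.
move=> indep i; apply/existsP; apply: contraT => /existsPn h_i0.
suff : (i == i)%:R = 0 :> C by rewrite eqxx => /eqP; rewrite oner_eq0.
apply: (indep (fun j => (j == i)%:R)) => v; under eq_bigr do rewrite mulrC.
by rewrite sum_mulr_eq; apply/eqP/negPn/h_i0.
Qed.

End VertexFunctions.

Section Characters.
Variables (R : comPzRingType) (N : nat).
Implicit Types v g : cube N.

Definition cube_char v g : R := (-1) ^+ ip2 v g.

Lemma cube_charE v g : cube_char v g = \prod_i (-1) ^+ (v i && g i).
Proof.
rewrite prodrXr /cube_char /ip2 -sum1_card big_mkcond /=; congr (_ ^+ _).
by apply: eq_bigr => i _; rewrite inE; case: (_ && _).
Qed.

Lemma cube_charC v g : cube_char v g = cube_char g v.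
Proof. by rewrite /cube_char /ip2; congr (_ ^+ _); apply: eq_card => i; rewrite !inE andbC. Qed.

Lemma cube_char_cube0 v : cube_char v (cube0 N) = 1.
Proof. by rewrite cube_charE big1 // => i _; rewrite ffunE andbF. Qed.

Lemma cube_char_cube1 g : cube_char (cube1 N) g = (-1) ^+ wt g.
Proof. by rewrite /cube_char /ip2 /wt; congr (_ ^+ _); apply: eq_card => i; rewrite !inE ffunE. Qed.

Lemma sum_cube_charM g g' :
  \sum_v cube_char v g * cube_char v g' = (g == g')%:R * 2 ^+ N.
Proof.
have coordE i : \sum_(b : bool) (-1) ^+ (b && g i) * (-1) ^+ (b && g' i) =
    if g i == g' i then 2 else 0 :> R.
  by rewrite big_bool; case: (g i); case: (g' i);
    rewrite /= ?expr0 ?expr1 ?mulrNN ?mulr1 ?mul1r ?mulN1r ?opprK ?addNr ?subrr -?mulr2n.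
transitivity (\prod_i \sum_(b : bool) (-1) ^+ (b && g i) * (-1) ^+ (b && g' i) : R).
  rewrite bigA_distr_bigA /=; apply: eq_bigr => v _.
  by rewrite !cube_charE -big_split.
under eq_bigr do rewrite coordE.
have [<-|neq] := eqVneq g g'.
  by rewrite (eq_bigr (fun=> 2)) ?prodr_const ?card_ord ?mul1r // => i _; rewrite eqxx.
have [i neq_i] : exists i, g i != g' i.
  by apply/existsP; apply: contra_neqT neq => /existsPn eq_g; apply/ffunP => i; apply/eqP/negPn.
by rewrite (bigD1 i) //= (negbTE neq_i) !mul0r.
Qed.

Definition cube_flip v (i : 'I_N) : cube N := [ffun j => (j == i) (+) v j].

Lemma cube_char_flip v i g : cube_char (cube_flip v i) g = (-1) ^+ g i * cube_char v g.
Proof.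
rewrite !cube_charE (bigD1 i) //= [in RHS](bigD1 i) //= ffunE eqxx mulrA.
rewrite (eq_bigr (fun j => (-1) ^+ (v j && g j))) => [|j /negbTE neq]; last by rewrite ffunE neq.
by congr (_ * _); case: (v i); case: (g i); rewrite /= ?expr0 ?expr1 ?mulrNN ?mulr1.
Qed.

End Characters.

Section Adjacency.
Variable N : nat.
Implicit Types v w : cube N.

Lemma cube_flip_inj v : injective (cube_flip v).
Proof. by move=> i j /ffunP /(_ i); rewrite !ffunE eqxx; case: eqP => // _; case: (v i). Qed.

Lemma cube_adjE v w : cube_adj v w = (w \in [set cube_flip v i | i : 'I_N]).
Proof.
apply/cards1P/imsetP => [[i /setP eq_i]|[i _ ->]].
  exists i => //; apply/ffunP => j; move: (eq_i j); rewrite !inE ffunE => <-.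
  by case: (v j); case: (w j).
by exists i; apply/setP => j; rewrite !inE ffunE; case: (j == i); case: (v j).
Qed.

Lemma big_cube_adj (V : nmodType) (F : cube N -> V) v :
  \sum_(w | cube_adj v w) F w = \sum_i F (cube_flip v i).
Proof.
rewrite (eq_bigl (mem [set cube_flip v i | i : 'I_N])) => [|w]; last by rewrite cube_adjE.
by rewrite big_imset //= => i j _ _; apply: cube_flip_inj.
Qed.

End Adjacency.

Section Levels.
Variable N : nat.
Implicit Types g : cube N.

Lemma wt_ltn g : (wt g < N.+1)%N.
Proof. by rewrite ltnS /wt -[X in (_ <= X)%N]card_ord max_card. Qed.

Definition level g : 'I_N.+1 := inord (wt g).

Lemma levelE g : level g = wt g :> nat.
Proof. by rewrite inordK // wt_ltn. Qed.

Lemma level_eq g (k : 'I_N.+1) : (level g == k) = (wt g == k).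
Proof. by rewrite -(inj_eq val_inj) /= levelE. Qed.

Definition level_repr (k : 'I_N.+1) : cube N := [ffun i : 'I_N => (i < k)%N].

Lemma wt_level_repr k : wt (level_repr k) = k.
Proof.
rewrite /wt -sum1_card (eq_bigl (fun i : 'I_N => true && (i < k)%N)) => [|i]; last first.
  by rewrite inE ffunE.
by rewrite (big_ord_narrow_cond (ltn_ord k : (k <= N)%N)) sum1_card card_ord.
Qed.

Lemma level_reprK : cancel level_repr level.
Proof. by move=> k; apply: ord_inj; rewrite levelE wt_level_repr. Qed.

Lemma level_repr_inj : injective level_repr.
Proof. exact: can_inj level_reprK. Qed.

Lemma nonrepr_level_reprF g k : g != level_repr (level g) -> (g == level_repr k) = false.
Proof. by apply: contraNF => /eqP ->; rewrite level_reprK eqxx. Qed.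

Definition nlevel (k : 'I_N.+1) : nat := #|[set g | level g == k]|.

Lemma nlevel_gt0 k : (0 < nlevel k)%N.
Proof. by apply/card_gt0P; exists (level_repr k); rewrite inE level_reprK. Qed.

Lemma sum_level (V : nmodType) (G : 'I_N.+1 -> V) :
  \sum_g G (level g) = \sum_k G k *+ nlevel k.
Proof.
rewrite (partition_big level xpredT) //=; apply: eq_bigr => k _.
rewrite (eq_bigr (fun=> G k)) => [|g /eqP -> //].
by rewrite sumr_const; congr (_ *+ _); apply: eq_card => g; rewrite inE.
Qed.

End Levels.

Section Fourier.
Variables (C : numClosedFieldType) (N : nat).
Implicit Types (v g : cube N) (F G : cube N -> C).
Local Notation s := (sqrtC (2 ^+ N : C))^-1.

Lemma conj_inv_sqrt2N : s^* = s.
Proof. by apply/conj_Creal/ger0_real; rewrite invr_ge0 sqrtC_ge0 exprn_ge0 // ler0n. Qed.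

Lemma inv_sqrt2N_sqr : s * s = (2 ^+ N)^-1.
Proof. by rewrite -invfM -expr2 sqrtCK. Qed.

Lemma hgammaE g v : hgamma C g v = s * cube_char C v g.
Proof. by []. Qed.

Lemma hgammaC g v : hgamma C g v = hgamma C v g.
Proof. by rewrite !hgammaE cube_charC. Qed.

Lemma conj_hgamma g v : (hgamma C g v)^* = hgamma C g v.
Proof. by rewrite /hgamma rmorphM /= conj_inv_sqrt2N rmorphXn /= rmorphN1. Qed.

Lemma hgamma_cube0 g : hgamma C g (cube0 N) = s.
Proof. by rewrite hgammaC hgammaE cube_char_cube0 mulr1. Qed.

Lemma hgamma_cube1 g : hgamma C g (cube1 N) = s * (-1) ^+ wt g.
Proof. by rewrite hgammaE cube_char_cube1. Qed.

Lemma sum_hgammaM g g' : \sum_v hgamma C g v * hgamma C g' v = (g == g')%:R.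
Proof.
under eq_bigr do rewrite !hgammaE mulrACA.
rewrite -mulr_sumr sum_cube_charM inv_sqrt2N_sqr mulrCA mulVf ?mulr1 //.
by rewrite expf_neq0 // pnatr_eq0.
Qed.

Lemma cubeL_hgamma g v : cubeL (hgamma C g) v = (2 * wt g)%:R * hgamma C g v.
Proof.
have wtE : wt g = \sum_i (g i : nat).
  by rewrite /wt -sum1_card big_mkcond; apply: eq_bigr => i _; rewrite inE; case: (g i).
rewrite /cubeL big_cube_adj wtE natrM natr_sum mulr_sumr mulr_suml.
apply: eq_bigr => i _; rewrite [hgamma C g (cube_flip _ _)]hgammaE cube_char_flip mulrCA -hgammaE.
by case: (g i); rewrite /= ?expr0 ?expr1; ring.
Qed.

Definition fourier F v : C := \sum_g F g * hgamma C g v.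

Lemma cdot_fourier F G : cdot (fourier F) (fourier G) = \sum_g F g * (G g)^*.
Proof.
rewrite /cdot /fourier.
under eq_bigr do rewrite rmorph_sum big_distrlr /=.
rewrite exchange_big; apply: eq_bigr => g _; rewrite exchange_big /=.
rewrite -(sum_mulr_eq (fun g' => F g * (G g')^*)).
apply: eq_bigr => g' _; rewrite eq_sym -sum_hgammaM mulr_sumr; apply: eq_bigr => v _.
by rewrite rmorphM /= conj_hgamma mulrACA.
Qed.

Lemma fourier_delta a v : fourier (fun g => hgamma C g a) v = (v == a)%:R.
Proof.
rewrite /fourier (eq_bigr (fun g => hgamma C a g * hgamma C v g)) => [|g _].
  by rewrite sum_hgammaM eq_sym.
by rewrite -!(hgammaC g).
Qed.

Lemma fourier_cube0 F : fourier F (cube0 N) = s * \sum_g F g.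
Proof. by rewrite /fourier mulr_sumr; apply: eq_bigr => g _; rewrite hgamma_cube0 mulrC. Qed.

Lemma fourier_cube1 F : fourier F (cube1 N) = s * \sum_g (-1) ^+ wt g * F g.
Proof. by rewrite /fourier mulr_sumr; apply: eq_bigr => g _; rewrite hgamma_cube1; ring. Qed.

Lemma cubeL_fourier F v : cubeL (fourier F) v = fourier (fun g => (2 * wt g)%:R * F g) v.
Proof.
rewrite /cubeL /fourier.
under eq_bigr do rewrite -sumrB.
rewrite exchange_big; apply: eq_bigr => g _.
rewrite mulrAC -cubeL_hgamma [RHS]mulrC /cubeL mulr_sumr; apply: eq_bigr => w _.
by rewrite mulrBr.
Qed.

Lemma cube0_neq1 : (0 < N)%N -> cube0 N != cube1 N.
Proof. by move=> N_gt0; apply/eqP => /ffunP /(_ (Ordinal N_gt0)); rewrite !ffunE. Qed.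

Lemma corner_rank1 (alpha : C) f v : (0 < N)%N -> `|alpha| = 1 ->
  corner alpha f v =
  (f (cube0 N) - alpha^* * f (cube1 N)) * ((v == cube0 N)%:R - alpha * (v == cube1 N)%:R).
Proof.
move=> N_gt0 alpha_unit; have alphaK : alpha * alpha^* = 1 by rewrite -normCK alpha_unit expr1n.
have alpha_neq0 : alpha != 0 by apply: contra_eq_neq alphaK => ->; rewrite mul0r eq_sym oner_neq0.
have alphaV : alpha^-1 = alpha^* by rewrite -[LHS]mulr1 -alphaK mulKf.
rewrite /corner; have [->|v_neq0] := eqVneq v (cube0 N).
  by rewrite (negbTE (cube0_neq1 N_gt0)) alphaV /=; ring.
case: eqP => _ /=; last by rewrite mulr0 subrr mulr0.
by rewrite /= mulr0n mulr1n mulr1 sub0r -{1}[f (cube1 N)]mul1r -alphaK; ring.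
Qed.

Lemma corner_fourier (alpha : C) F v : (0 < N)%N -> `|alpha| = 1 ->
  corner alpha (fourier F) v =
  fourier (fun g => (fourier F (cube0 N) - alpha^* * fourier F (cube1 N)) *
                    (hgamma C g (cube0 N) - alpha * hgamma C g (cube1 N))) v.
Proof.
move=> N_gt0 alpha_unit; rewrite corner_rank1 // -!fourier_delta.
set c := (_ - _ * fourier F _); rewrite /fourier [alpha * _]mulr_sumr -sumrB mulr_sumr.
by apply: eq_bigr => g _; ring.
Qed.

End Fourier.

Section DirichletVectors.
Variables (C : numClosedFieldType) (N : nat).
Implicit Types i g : cube N.

Definition dirichlet_coef i g : C := (g == i)%:R - (g == level_repr (level i))%:R.

Lemma sum_level_dirichlet_coef i (G : 'I_N.+1 -> C) :
  \sum_g G (level g) * dirichlet_coef i g = 0.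
Proof.
under eq_bigr do rewrite mulrBr.
by rewrite sumrB !sum_mulr_eq level_reprK subrr.
Qed.

Lemma dirichlet_cube0 i : fourier (dirichlet_coef i) (cube0 N) = 0.
Proof.
rewrite fourier_cube0 (eq_bigr (fun g => 1 * dirichlet_coef i g)) => [|g _].
  by rewrite (sum_level_dirichlet_coef i (fun=> 1)) mulr0.
by rewrite mul1r.
Qed.

Lemma dirichlet_cube1 i : fourier (dirichlet_coef i) (cube1 N) = 0.
Proof.
rewrite fourier_cube1 (eq_bigr (fun g => (-1) ^+ level g * dirichlet_coef i g)) => [|g _].
  by rewrite (sum_level_dirichlet_coef i (fun k => (-1) ^+ k)) mulr0.
by rewrite levelE.
Qed.

Lemma cubeL_dirichlet i v :
  cubeL (fourier (dirichlet_coef i)) v = (2 * wt i)%:R * fourier (dirichlet_coef i) v.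
Proof.
rewrite cubeL_fourier /fourier mulr_sumr; apply: eq_bigr => g _; rewrite mulrA; congr (_ * _).
rewrite /dirichlet_coef; have [->|_] := eqVneq g i; first by rewrite mulrC.
have [->|_] := eqVneq g (level_repr (level i)); last by rewrite subrr !mulr0.
by rewrite wt_level_repr levelE mulrC.
Qed.

Lemma augL_dirichlet (alpha : C) i v :
  augL alpha (fourier (dirichlet_coef i)) v = cubeL (fourier (dirichlet_coef i)) v.
Proof.
by rewrite /augL /corner dirichlet_cube0 dirichlet_cube1 mul0r mulr0 subrr !if_same addr0.
Qed.

End DirichletVectors.

Section LevelSubspace.
Variables (C : numClosedFieldType) (N : nat).
Implicit Types (p q : 'I_N.+1 -> C) (k j : 'I_N.+1) (g : cube N).
Local Notation s := (sqrtC (2 ^+ N : C))^-1.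

Definition lnorm k : C := sqrtC (nlevel k)%:R.

Lemma lnorm_neq0 k : lnorm k != 0.
Proof. by rewrite sqrtC_eq0 pnatr_eq0 -lt0n nlevel_gt0. Qed.

Lemma conj_lnorm k : (lnorm k)^* = lnorm k.
Proof. by rewrite conj_sqrtC // ler0n. Qed.

Lemma lnorm_sqr k : lnorm k * lnorm k = (nlevel k)%:R.
Proof. by rewrite -expr2 sqrtCK. Qed.

Definition level_coef p g : C := p (level g) / lnorm (level g).

Lemma sum_level_coef p (G : 'I_N.+1 -> C) :
  \sum_g level_coef p g * G (level g) = \sum_k p k * lnorm k * G k.
Proof.
rewrite (sum_level (fun k => p k / lnorm k * G k)); apply: eq_bigr => k _.
by rewrite -mulr_natl -lnorm_sqr; field; exact: lnorm_neq0.
Qed.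

Lemma cdot_level_coef p q :
  cdot (fourier (level_coef p)) (fourier (level_coef q)) = \sum_k p k * (q k)^*.
Proof.
rewrite cdot_fourier (sum_level_coef p (fun k => (q k / lnorm k)^*)).
apply: eq_bigr => k _; rewrite rmorphM fmorphV /= conj_lnorm.
by field; exact: lnorm_neq0.
Qed.

Lemma cnorm_hsum k : cnorm (hsum C (N := N) k) = lnorm k.
Proof.
rewrite /cnorm; congr sqrtC.
transitivity (cdot (fourier (level_coef (fun j => (j == k)%:R * lnorm j)))
                   (fourier (level_coef (fun j => (j == k)%:R * lnorm j)))).
  apply: eq_bigr => v _; congr (_ * _^*); rewrite /hsum /fourier big_mkcond /=;
  apply: eq_bigr => g _; rewrite /level_coef mulfK ?lnorm_neq0 // level_eq;
  by case: (_ == _); rewrite ?mul1r ?mul0r.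
rewrite cdot_level_coef (bigD1 k) //= big1 => [|j /negbTE ->]; last by rewrite !mul0r.
by rewrite eqxx !mul1r conj_lnorm lnorm_sqr addr0.
Qed.

Lemma level_coef_type_ii p : type_ii (fourier (level_coef p)).
Proof.
exists p => v; rewrite /fourier (partition_big (@level N) xpredT) //=.
apply: eq_bigr => k _; rewrite /hnk cnorm_hsum /hsum !mulr_sumr.
rewrite [in RHS](eq_bigl (fun g => level g == k)) => [|g]; last by rewrite level_eq.
by apply: eq_bigr => g /eqP <-; rewrite /level_coef [RHS]mulrA.
Qed.

Variable alpha : C.

Definition lweight k : C := lnorm k * (1 - alpha * (-1) ^+ k).

(* The matrix of L_alpha on the orthonormal family h_{n,k}: its entry (k, j) is
   <L_alpha h_{n,k}, h_{n,j}>, so a row vector p with p *m augLmx = d *: p gives the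
   eigenvector sum_k p_k h_{n,k}.  The rank one part comes from C_alpha, since
   2^{N/2} <delta_0 - alpha delta_1, h_{n,k}> = lweight k. *)
Definition augLmx : 'M[C]_N.+1 :=
  \matrix_(k, j) ((k == j)%:R * (2 * j)%:R + (2 ^+ N)^-1 * (lweight k)^* * lweight j).

Lemma augLmx_normal : augLmx \is normalmx.
Proof.
apply/hermitian_normalmx/is_hermitianmxP; rewrite expr0 scale1r.
apply/matrixP => k j; rewrite !mxE; move: (lweight k) (lweight j) => wk wj.
rewrite [RHS]rmorphD ![in RHS]rmorphM /= !rmorph_nat conjCK fmorphV /= rmorphXn rmorph_nat eq_sym.
by have [->|_] := eqVneq j k; rewrite ?mul0r ?add0r mulrAC.
Qed.

Lemma augLmx_mulE p j : \sum_k p k * augLmx k j =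
  p j * (2 * j)%:R + (2 ^+ N)^-1 * lweight j * \sum_k p k * (lweight k)^*.
Proof.
rewrite (eq_bigr (fun k => p k * (2 * j)%:R * (k == j)%:R +
  (2 ^+ N)^-1 * lweight j * (p k * (lweight k)^*))) => [|k _]; last by rewrite mxE; ring.
by rewrite big_split /= sum_mulr_eq mulr_sumr.
Qed.

Lemma augL_level_coef p d : (0 < N)%N -> `|alpha| = 1 ->
  (forall j, \sum_k p k * augLmx k j = d * p j) ->
  forall v, augL alpha (fourier (level_coef p)) v = d * fourier (level_coef p) v.
Proof.
move=> N_gt0 alpha_unit eig v.
rewrite /augL cubeL_fourier corner_fourier //.
set c := (_ - _ * _).
have cE : c = s * \sum_k p k * (lweight k)^*.
  rewrite /c fourier_cube0 fourier_cube1 mulrCA -mulrBr mulr_sumr -sumrB; congr (_ * _).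
  transitivity (\sum_g level_coef p g * (1 - alpha * (-1) ^+ level g)^*).
    apply: eq_bigr => g _; rewrite rmorphB rmorphM /= rmorphXn rmorph1 rmorphN1 levelE.
    by ring.
  rewrite (sum_level_coef p (fun k => (1 - alpha * (-1) ^+ k)^*)); apply: eq_bigr => k _.
  by rewrite /lweight rmorphM /= conj_lnorm mulrA.
rewrite /fourier -big_split mulr_sumr /=; apply: eq_bigr => g _.
rewrite -mulrDl [RHS]mulrA; congr (_ * _).
rewrite hgamma_cube0 hgamma_cube1 cE -!levelE /level_coef [d * _]mulrA.
have := eig (level g); rewrite augLmx_mulE /lweight => <-; rewrite -inv_sqrt2N_sqr.
by field; rewrite lnorm_neq0 sqrtC_eq0 expf_neq0 // pnatr_eq0.
Qed.

End LevelSubspace.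

Section Eigenbasis.
Variables (C : numClosedFieldType) (N : nat) (alpha : C).
Implicit Types i g : cube N.
Local Notation P := (spectralmx (augLmx N alpha)).

(* Fourier coefficients of the eigenbasis, indexed by vertices: the representative of
   level k carries the k-th row of the unitary diagonaliser of augLmx, any other gamma
   carries h_gamma - h_(representative of its level). *)
Definition eigcoef i : cube N -> C :=
  if i == level_repr (level i) then level_coef (P (level i)) else dirichlet_coef C i.

Definition eigbasis i : cube N -> C := fourier (eigcoef i).

Lemma eigbasis_repr k : eigbasis (level_repr k) = fourier (level_coef (P k)).
Proof. by rewrite /eigbasis /eigcoef level_reprK eqxx. Qed.

Lemma cdot_eigbasis_repr i k :
  cdot (eigbasis i) (eigbasis (level_repr k)) = (i == level_repr k)%:R.
Proof.
rewrite eigbasis_repr /eigbasis /eigcoef; case: ifPn => [/eqP i_repr|not_repr].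
  by rewrite cdot_level_coef spectralmx_row_dot [in RHS]i_repr (inj_eq (@level_repr_inj N)).
rewrite cdot_fourier; under eq_bigr do rewrite mulrC.
by rewrite (sum_level_dirichlet_coef i (fun k' => (P k k' / lnorm C k')^*))
  (nonrepr_level_reprF _ not_repr).
Qed.

Lemma cdot_eigbasis_delta i a :
  cdot (eigbasis i) (fourier (fun g => (g == a)%:R)) = eigcoef i a.
Proof. by rewrite cdot_fourier; under eq_bigr do rewrite rmorph_nat; rewrite sum_mulr_eq. Qed.

Lemma eigbasis_lin_indep : lin_indep eigbasis.
Proof.
move=> c sum_eq0.
have dot_eq0 t : \sum_i c i * cdot (eigbasis i) t = 0.
  by rewrite -cdot_suml /cdot big1 // => v _; rewrite sum_eq0 mul0r.
have c_repr k : c (level_repr k) = 0.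
  rewrite -(dot_eq0 (eigbasis (level_repr k))).
  by under eq_bigr do rewrite cdot_eigbasis_repr; rewrite sum_mulr_eq.
move=> i; have [->|not_repr] := eqVneq i (level_repr (level i)); first exact: c_repr.
rewrite -(dot_eq0 (fourier (fun g => (g == i)%:R))) (bigD1 i) //= big1 => [|j neq_ji].
  by rewrite cdot_eigbasis_delta /eigcoef /dirichlet_coef !(negbTE not_repr) eqxx subr0 mulr1 addr0.
rewrite cdot_eigbasis_delta /eigcoef; case: ifPn => [/eqP j_repr|_].
  by rewrite j_repr c_repr mul0r.
by rewrite /dirichlet_coef eq_sym (negbTE neq_ji) (nonrepr_level_reprF _ not_repr) subrr mulr0.
Qed.

Lemma eigbasis_type i : type_i alpha (eigbasis i) \/ type_ii (eigbasis i).
Proof.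
have := lin_indep_neq0 eigbasis_lin_indep i; rewrite /eigbasis /eigcoef.
case: ifP => _ nz; first by right; exact: level_coef_type_ii.
left; split.
  split; last by split; [exact: dirichlet_cube0 | exact: dirichlet_cube1].
  by exists (2 * wt i)%:R; split=> // v; exact: cubeL_dirichlet.
by exists (2 * wt i)%:R; split; split=> // v; rewrite ?augL_dirichlet cubeL_dirichlet.
Qed.

Lemma eigbasis_eigenpair i : (0 < N)%N -> `|alpha| = 1 ->
  exists lam, eigenpair (augL alpha) (eigbasis i) lam.
Proof.
move=> N_gt0 alpha_unit; have := lin_indep_neq0 eigbasis_lin_indep i.
rewrite /eigbasis /eigcoef; case: ifP => _ nz.
  exists (spectral_diag (augLmx N alpha) 0 (level i)); split=> // v.
  by apply: augL_level_coef => //; apply/spectralmx_eigen_row/augLmx_normal.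
by exists (2 * wt i)%:R; split=> // v; rewrite augL_dirichlet cubeL_dirichlet.
Qed.

End Eigenbasis.

Theorem lemma4 (C : numClosedFieldType) (N : nat) (alpha : C) :
  (0 < N)%N -> `|alpha| = 1 ->
  exists h : cube N -> cube N -> C,
    complete_eigvecs (augL alpha) h /\
    (forall i, type_i alpha (h i) \/ type_ii (h i)) /\
    exists S : {set cube N},
      #|S| = N.+1 /\
      (forall i, i \in S -> type_ii (h i)) /\
      (forall i j, i \in S -> j \in S -> i != j -> cdot (h i) (h j) = 0).
Proof.
move=> N_gt0 alpha_unit; exists (eigbasis alpha).
split; first by split=> [|i]; [exact: eigbasis_lin_indep | exact: eigbasis_eigenpair].
split=> [i|]; first exact: eigbasis_type.
exists [set level_repr k | k : 'I_N.+1]; split; [|split].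
- by rewrite card_imset ?card_ord //; exact: level_repr_inj.
- by move=> _ /imsetP [k _ ->]; rewrite eigbasis_repr; exact: level_coef_type_ii.
- by move=> i _ _ /imsetP [k _ ->] neq; rewrite cdot_eigbasis_repr (negbTE neq).
Qed.
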